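(* Let $\Gamma$ be a set, $X$ a closed subspace of $c_0(\Gamma)$, and let $(x_n^* )$ be a sequence in $X^*$ converging weak$^*$ to $x^*\in X^*$. Then for every finite-dimensional subspace $F\subset X^*$, $$\liminf_{n\to\infty}\operatorname{dist}(x_n^*,F)\ge \liminf_{n\to\infty}\|x_n^*\|-\|x^*\|.$$ *)

From Stdlib Require Import Reals Lra List ClassicalEpsilon.
Open Scope R_scope.

(* Total supremum: the least upper bound of E if E is nonempty and bounded
   above, and 0 otherwise (only used on nonempty bounded sets). *)
Definition Rsup (E : R -> Prop) : R :=
  match excluded_middle_informative (bound E /\ exists x, E x) with
  | left h => proj1_sig (completeness E (proj1 h) (proj2 h))
  | right _ => 0
  end.

Definition Rinf (E : R -> Prop) : R := - Rsup (fun x => E (- x)).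

(* liminf of a real sequence: sup_n inf_{k >= n} u k (meaningful for bounded u). *)
Definition liminf (u : nat -> R) : R :=
  Rsup (fun y => exists n : nat, y = Rinf (fun z => exists k, (n <= k)%nat /\ z = u k)).

Definition in_c0 {Gamma : Type} (f : Gamma -> R) : Prop :=
  forall eps, 0 < eps -> exists l : list Gamma,
    forall g, eps <= Rabs (f g) -> In g l.

Definition supnorm {Gamma : Type} (f : Gamma -> R) : R :=
  Rsup (fun r => exists g, r = Rabs (f g)).

Definition closed_subspace_c0 {Gamma : Type} (X : (Gamma -> R) -> Prop) : Prop :=
  (forall f, X f -> in_c0 f) /\
  X (fun _ => 0) /\
  (forall a f h, X f -> X h -> X (fun g => a * f g + h g)) /\
  (forall (fs : nat -> Gamma -> R) f, (forall n, X (fs n)) -> in_c0 f ->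
     Un_cv (fun n => supnorm (fun g => fs n g - f g)) 0 -> X f).

(* Elements of X^*: functionals that are linear and bounded on X
   (their values off X are irrelevant). *)
Definition in_dual {Gamma : Type} (X : (Gamma -> R) -> Prop)
  (phi : (Gamma -> R) -> R) : Prop :=
  (forall a f h, X f -> X h -> phi (fun g => a * f g + h g) = a * phi f + phi h) /\
  (exists C, forall f, X f -> Rabs (phi f) <= C * supnorm f).

Definition dnorm {Gamma : Type} (X : (Gamma -> R) -> Prop)
  (phi : (Gamma -> R) -> R) : R :=
  Rsup (fun r => exists f, X f /\ supnorm f <= 1 /\ r = Rabs (phi f)).

Fixpoint lin_comb {Gamma : Type} (c : list R) (B : list ((Gamma -> R) -> R))
  (f : Gamma -> R) : R :=
  match c, B with
  | a :: c', b :: B' => a * b f + lin_comb c' B' f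
  | _, _ => 0
  end.

Definition dist_span {Gamma : Type} (X : (Gamma -> R) -> Prop)
  (phi : (Gamma -> R) -> R) (B : list ((Gamma -> R) -> R)) : R :=
  Rinf (fun r => exists c : list R, length c = length B /\
          r = dnorm X (fun f => phi f - lin_comb c B f)).

From Stdlib Require Import Reals List.
From Stdlib Require Import Lra Lia ClassicalEpsilon Classical FunctionalExtensionality.
Open Scope R_scope.

(* Put z_n = x_n - x, a weak*-null sequence.  The c_0 structure enters
   through a gliding-hump averaging argument: for every finite family C of
   functionals, eventually z_n has an almost norming vector h of norm about 1
   on which every functional of C is small (almost_norming_eventually).  Since
   span B has finite codimension in the sense of [corrects], such an h can be
   moved into the common kernel of B at a cost proportional to max_b |b h|
   (annihilated_almost_norming).  Testing x_n - sum_i c_i b_i against this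
   vector, on which it coincides with z_n + x and x is small, gives
   dist(x_n, F) >= ||z_n|| - o(1) >= ||x_n|| - ||x|| - o(1) (dist_lower_bound),
   and a purely real lemma on liminf (liminf_ge_shift) concludes. *)

Lemma Rsup_lub (E : R -> Prop) : bound E -> (exists x, E x) -> is_lub E (Rsup E).
Proof.
  intros hb hne. unfold Rsup.
  destruct (excluded_middle_informative (bound E /\ exists x, E x)) as [h|h].
  - exact (proj2_sig (completeness E (proj1 h) (proj2 h))).
  - tauto.
Qed.

Lemma Rsup_default (E : R -> Prop) : ~ (bound E /\ exists x, E x) -> Rsup E = 0.
Proof.
  intros h. unfold Rsup.
  destruct (excluded_middle_informative (bound E /\ exists x, E x)); tauto.
Qed.

Lemma Rsup_ub (E : R -> Prop) x : bound E -> E x -> x <= Rsup E.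
Proof. intros hb hx. apply (Rsup_lub E hb (ex_intro _ x hx)); auto. Qed.

Lemma Rsup_least (E : R -> Prop) M : (exists x, E x) -> (forall x, E x -> x <= M) ->
  Rsup E <= M.
Proof.
  intros hne hM. apply (Rsup_lub E); auto. exists M; exact hM.
Qed.

Lemma Rsup_le_nonneg (E : R -> Prop) M : (forall x, E x -> x <= M) -> 0 <= M -> Rsup E <= M.
Proof.
  intros hM h0. destruct (classic (exists x, E x)) as [hne|hne].
  - now apply Rsup_least.
  - rewrite Rsup_default; tauto.
Qed.

Lemma Rsup_nonneg (E : R -> Prop) : (forall x, E x -> 0 <= x) -> 0 <= Rsup E.
Proof.
  intros h. destruct (classic (bound E /\ exists x, E x)) as [[hb [x hx]]|hn].
  - apply Rle_trans with x; auto. now apply Rsup_ub.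
  - rewrite Rsup_default by exact hn; lra.
Qed.

Lemma Rsup_approx (E : R -> Prop) eps : bound E -> (exists x, E x) -> 0 < eps ->
  exists x, E x /\ Rsup E - eps < x.
Proof.
  intros hb hne he. destruct (Rsup_lub E hb hne) as [_ hleast].
  apply NNPP. intros hno.
  assert (Rsup E <= Rsup E - eps); [|lra].
  apply hleast. intros y hy. apply Rnot_lt_le. intros hlt. apply hno; eauto.
Qed.

Lemma Rinf_lb (E : R -> Prop) x : (exists m, forall y, E y -> m <= y) -> E x -> Rinf E <= x.
Proof.
  intros [m hm] hx. unfold Rinf.
  assert (- x <= Rsup (fun y => E (- y))); [|lra].
  apply Rsup_ub.
  - exists (- m). intros y hy. specialize (hm _ hy). lra.
  - now rewrite Ropp_involutive.
Qed.

Lemma Rinf_glb (E : R -> Prop) m : (exists x, E x) -> (forall y, E y -> m <= y) -> m <= Rinf E.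
Proof.
  intros [x hx] hm. unfold Rinf.
  assert (Rsup (fun y => E (- y)) <= - m); [|lra].
  apply Rsup_least.
  - exists (- x). now rewrite Ropp_involutive.
  - intros y hy. specialize (hm _ hy). lra.
Qed.

Lemma Rabs_le_iff x y : Rabs x <= y <-> - y <= x <= y.
Proof. unfold Rabs; destruct (Rcase_abs x); split; intros; lra. Qed.

Lemma Rabs_sub_le (a b : R) : Rabs (a - b) <= Rabs a + Rabs b.
Proof. pose proof (Rabs_triang a (- b)). rewrite Rabs_Ropp in *. unfold Rminus. lra. Qed.

Definition tail_inf (u : nat -> R) (n : nat) : R :=
  Rinf (fun z => exists k, (n <= k)%nat /\ z = u k).

Lemma tail_inf_le (u : nat -> R) n k : (forall k, 0 <= u k) -> (n <= k)%nat ->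
  tail_inf u n <= u k.
Proof.
  intros h hk. apply Rinf_lb; [|eauto]. exists 0. intros y [j [_ ->]]; auto.
Qed.

Lemma tail_inf_ge (u : nat -> R) n m : (forall k, (n <= k)%nat -> m <= u k) ->
  m <= tail_inf u n.
Proof.
  intros h. apply Rinf_glb; [exists (u n), n; auto|]. intros y [k [hk ->]]; auto.
Qed.

(* The sign conditions cover the degenerate case
   where [a] has unbounded tail infima and the total [Rsup] returns 0. *)
Lemma liminf_ge_shift (a d : nat -> R) c :
  (forall n, 0 <= d n <= a n) -> 0 <= c ->
  (forall t eps, 0 < eps -> exists N, forall n, (N <= n)%nat ->
     t <= a n - c -> t - eps <= d n) ->
  liminf d >= liminf a - c.
Proof.
  intros hda hc hev.
  change (Rsup (fun y => exists n, y = tail_inf d n) >=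
          Rsup (fun y => exists n, y = tail_inf a n) - c).
  set (Ia := fun y => exists n, y = tail_inf a n).
  set (Id := fun y => exists n, y = tail_inf d n).
  assert (hd0 : forall k, 0 <= d k) by (intros k; apply hda).
  assert (ha0 : forall k, 0 <= a k) by (intros k; pose proof (hda k); lra).
  assert (hId0 : 0 <= Rsup Id).
  { apply Rsup_nonneg. intros y [n ->]. apply tail_inf_ge. auto. }
  destruct (classic (bound Ia)) as [[M hM]|hunb].
  2: { rewrite (Rsup_default Ia); [lra|]. tauto. }
  assert (hbId : bound Id).
  { exists M. intros y [n ->]. apply Rle_trans with (tail_inf a n).
    - apply tail_inf_ge. intros k hk. apply Rle_trans with (d k); [|apply hda].
      now apply tail_inf_le.
    - apply hM. now exists n. }
  apply Rle_ge, le_epsilon. intros eps he.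
  destruct (Rsup_approx Ia (eps / 2)) as [y [[N0 ->] hy]];
    [now exists M | now exists (tail_inf a 0), 0%nat | lra |].
  destruct (hev (Rsup Ia - eps / 2 - c) (eps / 2)) as [N1 hN1]; [lra|].
  assert (htail : Rsup Ia - c - eps <= tail_inf d (max N0 N1)).
  { apply tail_inf_ge. intros k hk.
    assert (tail_inf a N0 <= a k) by (apply tail_inf_le; auto; lia).
    specialize (hN1 k ltac:(lia)). lra. }
  assert (tail_inf d (max N0 N1) <= Rsup Id) by (apply Rsup_ub; [exact hbId | now exists (max N0 N1)]).
  lra.
Qed.

Section SupNorm.
Context {G : Type}.

(* [f] is bounded (the sup-norm is then a genuine supremum). *)
Definition bounded_fun (f : G -> R) : Prop := exists M, forall g, Rabs (f g) <= M.

(* Vanishing at infinity forces boundedness: off a finite list, [|f| < 1]. *)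
Lemma c0_bounded (f : G -> R) : in_c0 f -> bounded_fun f.
Proof.
  intros h. destruct (h 1 Rlt_0_1) as [l hl].
  set (S := fun l' => fold_right (fun g acc => Rabs (f g) + acc) 0 l').
  assert (hS0 : forall l', 0 <= S l').
  { induction l' as [|a l' IH]; simpl; [lra|]. pose proof (Rabs_pos (f a)); lra. }
  assert (hSin : forall l' g, In g l' -> Rabs (f g) <= S l').
  { induction l' as [|a l' IH]; simpl; intros g hg; [destruct hg|].
    destruct hg as [->|hg]; [pose proof (hS0 l'); lra|].
    pose proof (IH g hg); pose proof (Rabs_pos (f a)); lra. }
  exists (1 + S l). intros g. destruct (Rle_dec 1 (Rabs (f g))) as [h1|h1].
  - pose proof (hSin l g (hl g h1)); lra.
  - pose proof (hS0 l); lra.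
Qed.

Lemma supnorm_ge_coord (f : G -> R) g : bounded_fun f -> Rabs (f g) <= supnorm f.
Proof.
  intros [M hM]. apply Rsup_ub; [|now exists g].
  exists M. intros r [g' ->]. auto.
Qed.

Lemma supnorm_le (f : G -> R) M : (forall g, Rabs (f g) <= M) -> 0 <= M -> supnorm f <= M.
Proof. intros h h0. apply Rsup_le_nonneg; auto. intros r [g ->]; auto. Qed.

Lemma supnorm_nonneg (f : G -> R) : 0 <= supnorm f.
Proof. apply Rsup_nonneg. intros r [g ->]. apply Rabs_pos. Qed.

Lemma supnorm_zero : supnorm (fun _ : G => 0) <= 0.
Proof. apply supnorm_le; [intros; rewrite Rabs_R0|]; lra. Qed.

End SupNorm.

Section Subspace.
Context {G : Type}.
Variable X : (G -> R) -> Prop.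
Hypothesis hX : closed_subspace_c0 X.

Lemma X_zero : X (fun _ => 0).
Proof. apply hX. Qed.

Lemma X_axpy a f h : X f -> X h -> X (fun g => a * f g + h g).
Proof. apply hX. Qed.

Lemma X_bounded f : X f -> bounded_fun f.
Proof. intros hf. apply c0_bounded, hX, hf. Qed.

Lemma X_scale a f : X f -> X (fun g => a * f g).
Proof.
  intros hf. replace (fun g => a * f g) with (fun g => a * f g + (fun _ : G => 0) g)
    by (extensionality g; ring).
  apply X_axpy; auto using X_zero.
Qed.

Lemma X_add f h : X f -> X h -> X (fun g => f g + h g).
Proof.
  intros hf hh. replace (fun g => f g + h g) with (fun g => 1 * f g + h g)
    by (extensionality g; ring).
  now apply X_axpy.
Qed.

Lemma X_sub f h : X f -> X h -> X (fun g => f g - h g).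
Proof.
  intros hf hh. replace (fun g => f g - h g) with (fun g => -1 * h g + f g)
    by (extensionality g; ring).
  now apply X_axpy.
Qed.

Lemma dnorm_nonneg phi : 0 <= dnorm X phi.
Proof. apply Rsup_nonneg. intros r [f [_ [_ ->]]]. apply Rabs_pos. Qed.

Section Functional.
Variable phi : (G -> R) -> R.
Hypothesis hphi : in_dual X phi.

Lemma dual_zero : phi (fun _ => 0) = 0.
Proof.
  pose proof (proj1 hphi 1 _ _ X_zero X_zero) as e. cbv beta in e.
  replace (fun _ : G => 1 * 0 + 0) with (fun _ : G => 0) in e
    by (extensionality g; ring).
  lra.
Qed.

Lemma dual_scale a f : X f -> phi (fun g => a * f g) = a * phi f.
Proof.
  intros hf. pose proof (proj1 hphi a f _ hf X_zero) as e. cbv beta in e.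
  replace (fun g : G => a * f g + 0) with (fun g => a * f g) in e
    by (extensionality g; ring).
  rewrite e, dual_zero; ring.
Qed.

Lemma dual_add f h : X f -> X h -> phi (fun g => f g + h g) = phi f + phi h.
Proof.
  intros hf hh. pose proof (proj1 hphi 1 f h hf hh) as e.
  replace (fun g : G => 1 * f g + h g) with (fun g => f g + h g) in e
    by (extensionality g; ring).
  rewrite e; ring.
Qed.

Lemma dual_sub f h : X f -> X h -> phi (fun g => f g - h g) = phi f - phi h.
Proof.
  intros hf hh. pose proof (proj1 hphi (-1) h f hh hf) as e.
  replace (fun g : G => -1 * h g + f g) with (fun g => f g - h g) in e
    by (extensionality g; ring).
  rewrite e; ring.
Qed.

Lemma dual_bounded : exists C, 0 <= C /\ forall f, X f -> Rabs (phi f) <= C * supnorm f.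
Proof.
  destruct hphi as [_ [C hC]]. exists (Rabs C). split; [apply Rabs_pos|].
  intros f hf. specialize (hC f hf). pose proof (supnorm_nonneg f).
  pose proof (Rle_abs C). nra.
Qed.

Lemma dnorm_set_bound :
  bound (fun r => exists f, X f /\ supnorm f <= 1 /\ r = Rabs (phi f)).
Proof.
  destruct dual_bounded as [C [hC0 hC]].
  exists C. intros r [f [hf [hs ->]]]. specialize (hC f hf). nra.
Qed.

Lemma dnorm_ge_eval f : X f -> supnorm f <= 1 -> Rabs (phi f) <= dnorm X phi.
Proof. intros hf hs. apply Rsup_ub; [apply dnorm_set_bound | now exists f]. Qed.

Lemma dnorm_bound f : X f -> Rabs (phi f) <= dnorm X phi * supnorm f.
Proof.
  intros hf. pose proof (supnorm_nonneg f) as hs0.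
  pose proof (dnorm_nonneg phi) as hd0.
  destruct (Req_dec (supnorm f) 0) as [e|ne].
  - assert (ef : f = (fun _ => 0)).
    { extensionality g. pose proof (supnorm_ge_coord f g (X_bounded f hf)) as hg.
      rewrite e in hg. destruct (Req_dec (f g) 0) as [|hne]; auto.
      pose proof (Rabs_pos_lt _ hne); lra. }
    subst f. rewrite dual_zero, Rabs_R0. nra.
  - set (s := supnorm f) in *.
    assert (hs : 0 < s) by lra.
    assert (hunit : supnorm (fun g => / s * f g) <= 1).
    { apply supnorm_le; [|lra]. intros g.
      rewrite Rabs_mult, Rabs_inv, (Rabs_pos_eq s) by lra.
      pose proof (supnorm_ge_coord f g (X_bounded f hf)) as hg. fold s in hg.
      apply Rmult_le_reg_l with s; auto. rewrite <- Rmult_assoc, Rinv_r; lra. }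
    pose proof (dnorm_ge_eval _ (X_scale (/ s) f hf) hunit) as h.
    rewrite (dual_scale (/ s) f hf), Rabs_mult, Rabs_inv, (Rabs_pos_eq s) in h by lra.
    apply Rmult_le_reg_l with (/ s); [now apply Rinv_0_lt_compat|].
    replace (/ s * (dnorm X phi * s)) with (dnorm X phi) by (field; lra). lra.
Qed.

Lemma dnorm_approx eps : 0 < eps ->
  exists f, X f /\ supnorm f <= 1 /\ dnorm X phi - eps <= phi f.
Proof.
  intros he.
  destruct (Rsup_approx _ eps dnorm_set_bound) as [r [[f [hf [hs ->]]] hr]]; auto.
  { exists (Rabs (phi (fun _ => 0))), (fun _ => 0).
    pose proof (@supnorm_zero G). repeat split; auto using X_zero; lra. }
  fold (dnorm X phi) in hr.
  destruct (Rle_dec 0 (phi f)) as [hpos|hneg].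
  - exists f. rewrite Rabs_pos_eq in hr; auto. repeat split; auto; lra.
  - exists (fun g => -1 * f g). repeat split; [now apply X_scale| |].
    + apply supnorm_le; [|lra]. intros g.
      rewrite Rabs_mult, (Rabs_left (-1)) by lra.
      pose proof (supnorm_ge_coord f g (X_bounded f hf)); lra.
    + rewrite dual_scale by auto. rewrite Rabs_left in hr; lra.
Qed.

End Functional.

Lemma dnorm_le phi M :
  (forall f, X f -> supnorm f <= 1 -> Rabs (phi f) <= M) -> 0 <= M -> dnorm X phi <= M.
Proof. intros h h0. apply Rsup_le_nonneg; auto. intros r [f [hf [hs ->]]]; auto. Qed.

Lemma in_dual_sub phi psi : in_dual X phi -> in_dual X psi ->
  in_dual X (fun f => phi f - psi f).
Proof.
  intros hp hq. split.
  - intros a f h hf hh. rewrite (proj1 hp), (proj1 hq) by auto. ring.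
  - destruct (dual_bounded phi hp) as [C1 [_ hC1]].
    destruct (dual_bounded psi hq) as [C2 [_ hC2]].
    exists (C1 + C2). intros f hf. specialize (hC1 f hf). specialize (hC2 f hf).
    pose proof (Rabs_triang (phi f) (- psi f)). rewrite Rabs_Ropp in *. unfold Rminus. lra.
Qed.

Lemma dnorm_le_sub phi psi : in_dual X phi -> in_dual X psi ->
  dnorm X phi <= dnorm X (fun f => phi f - psi f) + dnorm X psi.
Proof.
  intros hp hq. pose proof (dnorm_nonneg (fun f => phi f - psi f)).
  pose proof (dnorm_nonneg psi).
  apply dnorm_le; [|lra]. intros f hf hs.
  pose proof (dnorm_ge_eval _ (in_dual_sub phi psi hp hq) f hf hs).
  pose proof (dnorm_ge_eval psi hq f hf hs).
  pose proof (Rabs_triang (phi f - psi f) (psi f)).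
  replace (phi f - psi f + psi f) with (phi f) in * by ring. lra.
Qed.

Lemma lin_comb_in_dual (B : list ((G -> R) -> R)) :
  (forall b, In b B -> in_dual X b) -> forall c, in_dual X (lin_comb c B).
Proof.
  induction B as [|b B IH]; intros hB [|a c];
    try (split; simpl; [intros; ring | exists 0; intros; rewrite Rabs_R0; lra]).
  assert (hb : in_dual X b) by (apply hB; now left).
  assert (hL : in_dual X (lin_comb c B)) by (apply IH; intros; apply hB; now right).
  split.
  - intros al f h hf hh. simpl. rewrite (proj1 hb), (proj1 hL) by auto. ring.
  - destruct (dual_bounded b hb) as [C1 [_ hC1]].
    destruct (dual_bounded _ hL) as [C2 [_ hC2]].
    exists (Rabs a * C1 + C2). intros f hf. simpl.
    specialize (hC1 f hf). specialize (hC2 f hf).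
    pose proof (Rabs_triang (a * b f) (lin_comb c B f)). rewrite Rabs_mult in *.
    pose proof (Rmult_le_compat_l _ _ _ (Rabs_pos a) hC1). lra.
Qed.

End Subspace.

Lemma lin_comb_zero {G : Type} (B : list ((G -> R) -> R)) n f :
  lin_comb (repeat 0 n) B f = 0.
Proof.
  revert B. induction n as [|n IH]; intros [|b B]; simpl; try reflexivity.
  rewrite IH. ring.
Qed.

Lemma lin_comb_annihilated {G : Type} (B : list ((G -> R) -> R)) c h :
  (forall b, In b B -> b h = 0) -> lin_comb c B h = 0.
Proof.
  revert B. induction c as [|a c IH]; intros [|b B] hB; simpl; try reflexivity.
  rewrite (hB b (or_introl eq_refl)), IH by (intros; apply hB; now right). ring.
Qed.

Lemma dist_span_ge {G : Type} (X : (G -> R) -> Prop) phi B m :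
  (forall c, length c = length B -> m <= dnorm X (fun f => phi f - lin_comb c B f)) ->
  m <= dist_span X phi B.
Proof.
  intros h. apply Rinf_glb.
  - exists (dnorm X (fun f => phi f - lin_comb (repeat 0 (length B)) B f)).
    exists (repeat 0 (length B)). split; auto using repeat_length.
  - intros y [c [hc ->]]. auto.
Qed.

Lemma dist_span_le_dnorm {G : Type} (X : (G -> R) -> Prop) phi B :
  dist_span X phi B <= dnorm X phi.
Proof.
  apply Rinf_lb.
  - exists 0. intros y [c [_ ->]]. apply dnorm_nonneg.
  - exists (repeat 0 (length B)). split; [apply repeat_length|].
    f_equal. extensionality f. rewrite lin_comb_zero. ring.
Qed.

Definition infinitely (T : nat -> Prop) : Prop :=
  forall N, exists n, (N <= n)%nat /\ T n.

Lemma infinitely_split (T P Q : nat -> Prop) : infinitely T ->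
  (forall r, T r -> P r \/ Q r) ->
  infinitely (fun r => T r /\ P r) \/ infinitely (fun r => T r /\ Q r).
Proof.
  intros hT hPQ.
  destruct (classic (infinitely (fun r => T r /\ P r))) as [h|h]; [now left|right].
  apply not_all_ex_not in h as [N1 h1].
  intros N2. destruct (hT (max N1 N2)) as [n [hn Tn]].
  exists n. split; [lia|]. split; auto.
  destruct (hPQ n Tn) as [p|q]; auto.
  exfalso; apply h1. exists n; split; auto; lia.
Qed.

(* Values in a band of width [K * d] can be confined to width [d] along an
   infinite subset, by splitting off one strip of width [d] at a time. *)
Lemma refine_band (a : nat -> R) d : 0 < d -> forall (K : nat) (T : nat -> Prop) lo,
  infinitely T -> (forall r, T r -> lo <= a r <= lo + INR K * d) ->
  exists T', infinitely T' /\ (forall r, T' r -> T r) /\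
    forall r r', T' r -> T' r' -> Rabs (a r - a r') <= d.
Proof.
  intros hd K. induction K as [|K IH]; intros T lo hT hb.
  - exists T. repeat split; auto. intros r r' h1 h2.
    pose proof (hb r h1); pose proof (hb r' h2). simpl in *.
    rewrite Rabs_le_iff. lra.
  - destruct (infinitely_split T (fun r => a r <= lo + d) (fun r => lo + d <= a r) hT)
      as [h|h]; [intros r _; lra| |].
    + exists (fun r => T r /\ a r <= lo + d). repeat split; [auto|intros r []; auto|].
      intros r r' [h1 h1'] [h2 h2']. pose proof (hb r h1); pose proof (hb r' h2).
      rewrite Rabs_le_iff. lra.
    + destruct (IH _ (lo + d) h) as [T' [h1 [h2 h3]]].
      { intros r [hr1 hr2]. pose proof (hb r hr1). rewrite S_INR in *. lra. }
      exists T'. repeat split; auto. intros r hr. now apply h2.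
Qed.

Lemma refine_oscillation (a : nat -> R) d M (T : nat -> Prop) : 0 < d -> infinitely T ->
  (forall r, T r -> Rabs (a r) <= M) ->
  exists T', infinitely T' /\ (forall r, T' r -> T r) /\
    forall r r', T' r -> T' r' -> Rabs (a r - a r') <= d.
Proof.
  intros hd hT hb.
  destruct (INR_archimed d (2 * Rabs M) hd) as [K hK].
  apply (refine_band a d hd K T (- Rabs M) hT).
  intros r hr. specialize (hb r hr). pose proof (Rle_abs M).
  apply Rabs_le_iff in hb. lra.
Qed.

Lemma refine_oscillation_list {I : Type} (l : list I) (a : I -> nat -> R) d : 0 < d ->
  forall T : nat -> Prop, infinitely T ->
  (forall i, In i l -> exists M, forall r, T r -> Rabs (a i r) <= M) ->
  exists T', infinitely T' /\ (forall r, T' r -> T r) /\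
    forall i, In i l -> forall r r', T' r -> T' r' -> Rabs (a i r - a i r') <= d.
Proof.
  intros hd. induction l as [|i l IH]; intros T hT hb.
  - exists T. repeat split; auto. intros i [].
  - destruct (hb i (or_introl eq_refl)) as [M hM].
    destruct (refine_oscillation (a i) d M T hd hT hM) as [T1 [h1 [h2 h3]]].
    destruct (IH T1 h1) as [T2 [g1 [g2 g3]]].
    { intros j hj. destruct (hb j (or_intror hj)) as [M' hM'].
      exists M'. intros r hr. now apply hM', h2. }
    exists T2. repeat split; auto.
    intros j [<-|hj] r r' hr hr'; auto.
Qed.

Definition lsum (t : nat -> R) (ps : list nat) : R :=
  fold_right (fun p acc => t p + acc) 0 ps.

Lemma lsum_ge t ps m : (forall p, In p ps -> m <= t p) -> INR (length ps) * m <= lsum t ps.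
Proof.
  induction ps as [|p ps IH]; intros h; [simpl; lra|].
  change (lsum t (p :: ps)) with (t p + lsum t ps).
  change (length (p :: ps)) with (S (length ps)). rewrite S_INR. pose proof (h p (or_introl eq_refl)).
  assert (INR (length ps) * m <= lsum t ps) by (apply IH; intros; apply h; now right).
  lra.
Qed.

Lemma lsum_abs_le t ps m : (forall p, In p ps -> Rabs (t p) <= m) ->
  Rabs (lsum t ps) <= INR (length ps) * m.
Proof.
  induction ps as [|p ps IH]; intros h; [simpl; rewrite Rabs_R0; lra|].
  change (lsum t (p :: ps)) with (t p + lsum t ps).
  change (length (p :: ps)) with (S (length ps)). rewrite S_INR. pose proof (h p (or_introl eq_refl)).
  assert (Rabs (lsum t ps) <= INR (length ps) * m) by (apply IH; intros; apply h; now right).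
  pose proof (Rabs_triang (t p) (lsum t ps)). lra.
Qed.

(* Given vectors [f n] of [c_0(G)] in the unit ball, we pick
   indices [p_1, ..., p_K] one at a time, each time passing to an infinite set
   [T] of later indices on which all [f r] agree up to [d] on the (finite) set of
   coordinates where the chosen [f p] are [d]-large.  Then for [r] in [T] the
   vector [sum_p (f r - f p)] has sup-norm at most [K (1 + d) + 1]: at each
   coordinate only the first large [f p] contributes a term bigger than [1 + d]. *)
Section GlidingHump.
Context {G : Type}.
Variable f : nat -> G -> R.
Hypothesis f_c0 : forall n, in_c0 (f n).
Hypothesis f_unit : forall n g, Rabs (f n g) <= 1.
Variable d : R.
Hypothesis d_pos : 0 < d.

Definition diff_sum (r : nat) (ps : list nat) (g : G) : R :=
  lsum (fun p => f r g - f p g) ps.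

Definition large_at (ps : list nat) (g : G) : Prop :=
  exists p, In p ps /\ d <= Rabs (f p g).

Definition hump_state (T0 : nat -> Prop) (K : nat) (ps : list nat) (T : nat -> Prop) : Prop :=
  length ps = K /\ infinitely T /\ (forall p, In p ps -> T0 p) /\ (forall r, T r -> T0 r) /\
  (forall r r' g, T r -> T r' -> large_at ps g -> Rabs (f r g - f r' g) <= d) /\
  (forall r g, T r -> ~ large_at ps g -> Rabs (diff_sum r ps g) <= INR K * (1 + d)) /\
  (forall r g, T r -> Rabs (diff_sum r ps g) <= INR K * (1 + d) + 1).

(* One step of the construction: choose the next index inside [T], then refine
   [T] so that all later vectors are [d]-stable where the new one is large. *)
Lemma hump_step T0 K ps T : hump_state T0 K ps T ->
  exists p T', hump_state T0 (S K) (p :: ps) T'.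
Proof.
  intros [hlen [hT [hps [hTT0 [hstab [hsmall hall]]]]]].
  destruct (hT 0%nat) as [p [_ Tp]].
  destruct (f_c0 p d d_pos) as [l hl].
  destruct (refine_oscillation_list l (fun g r => f r g) d d_pos T hT)
    as [T' [hT' [hT'T hstab']]].
  { intros g _. exists 1. intros r _. apply f_unit. }
  assert (hsum : forall r g, diff_sum r (p :: ps) g = (f r g - f p g) + diff_sum r ps g)
    by reflexivity.
  assert (hdiff : forall r g, Rabs (f r g - f p g) <= 2).
  { intros r g. pose proof (Rabs_sub_le (f r g) (f p g)).
    pose proof (f_unit r g). pose proof (f_unit p g). lra. }
  exists p, T'. unfold hump_state. cbn [length In]. rewrite S_INR.
  repeat split.
  - now rewrite hlen.
  - exact hT'.
  - intros q [<-|hq]; auto.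
  - intros r hr. auto.
  - intros r r' g hr hr' [q [[<-|hq] hqg]].
    + now apply hstab'; [apply hl|..].
    + apply hstab; auto. now exists q.
  - intros r g hr hnot. rewrite hsum.
    assert (hold : Rabs (diff_sum r ps g) <= INR K * (1 + d)).
    { apply hsmall; [now apply hT'T|]. intros [q [hq hqg]].
      apply hnot. exists q; split; [now right | exact hqg]. }
    assert (hp : Rabs (f p g) < d).
    { apply Rnot_le_lt. intros hpg. apply hnot. exists p; split; [now left | exact hpg]. }
    pose proof (Rabs_triang (f r g - f p g) (diff_sum r ps g)).
    pose proof (Rabs_sub_le (f r g) (f p g)). pose proof (f_unit r g). lra.
  - intros r g hr. rewrite hsum.
    pose proof (Rabs_triang (f r g - f p g) (diff_sum r ps g)).
    pose proof (pos_INR K).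
    destruct (classic (large_at ps g)) as [hlarge|hnot].
    + assert (Rabs (f r g - f p g) <= d) by (apply hstab; auto).
      specialize (hall r g (hT'T r hr)). lra.
    + specialize (hsmall r g (hT'T r hr) hnot). specialize (hdiff r g). lra.
Qed.

Lemma hump_construction T0 : infinitely T0 -> forall K, exists ps T, hump_state T0 K ps T.
Proof.
  intros hT0 K. induction K as [|K [ps [T hK]]].
  - exists nil, T0. unfold hump_state, diff_sum. simpl.
    rewrite Rabs_R0. repeat split; auto; try (intros; lra).
    intros r r' g _ _ [p [[] _]].
  - destruct (hump_step _ _ _ _ hK) as [p [T' hstep]]. eauto.
Qed.

End GlidingHump.

Lemma average_ge t ps m : 0 < INR (length ps) -> (forall p, In p ps -> m <= t p) ->
  m <= / INR (length ps) * lsum t ps.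
Proof.
  intros hK h. pose proof (lsum_ge t ps m h).
  apply Rmult_le_reg_l with (INR (length ps)); auto.
  rewrite <- Rmult_assoc, Rinv_r; lra.
Qed.

Lemma average_abs_le t ps m : 0 < INR (length ps) -> (forall p, In p ps -> Rabs (t p) <= m) ->
  Rabs (/ INR (length ps) * lsum t ps) <= m.
Proof.
  intros hK h. pose proof (lsum_abs_le t ps m h).
  rewrite Rabs_mult, Rabs_inv, (Rabs_pos_eq (INR _)) by lra.
  apply Rmult_le_reg_l with (INR (length ps)); auto.
  rewrite <- Rmult_assoc, Rinv_r; lra.
Qed.

Lemma eventually_small_on_list (v : nat -> nat -> R) ps d : 0 < d ->
  (forall p, Un_cv (v p) 0) ->
  exists M, forall q, (M <= q)%nat -> forall p, In p ps -> Rabs (v p q) <= d.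
Proof.
  intros hd hv. induction ps as [|p ps [M1 hM1]].
  - exists 0%nat. intros q _ p [].
  - destruct (hv p d hd) as [M2 hM2].
    exists (max M1 M2). intros q hq r [<-|hr].
    + specialize (hM2 q ltac:(lia)). unfold R_dist in hM2. rewrite Rminus_0_r in hM2. lra.
    + apply hM1; auto; lia.
Qed.

Section Hump.
Context {G : Type}.
Variable X : (G -> R) -> Prop.
Hypothesis hX : closed_subspace_c0 X.

Lemma diff_sum_in_X f r ps : (forall n, X (f n)) -> X (diff_sum f r ps).
Proof.
  intros hf. induction ps as [|p ps IH].
  - exact (X_zero X hX).
  - change (X (fun g => (f r g - f p g) + diff_sum f r ps g)).
    apply (X_add X hX (fun g => f r g - f p g)); auto. apply X_sub; auto.
Qed.

Lemma diff_sum_eval phi f r ps : in_dual X phi -> (forall n, X (f n)) ->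
  phi (diff_sum f r ps) = lsum (fun p => phi (f r) - phi (f p)) ps.
Proof.
  intros hphi hf. induction ps as [|p ps IH].
  - exact (dual_zero X hX phi hphi).
  - change (phi (fun g => (f r g - f p g) + diff_sum f r ps g) =
            (phi (f r) - phi (f p)) + lsum (fun p => phi (f r) - phi (f p)) ps).
    rewrite (dual_add X phi hphi (fun g => f r g - f p g)), (dual_sub X phi hphi)
      by (try apply (X_sub X hX); auto using diff_sum_in_X).
    now rewrite IH.
Qed.

Definition almost_norming (u : (G -> R) -> R) (C : list ((G -> R) -> R)) eps (h : G -> R) :=
  X h /\ supnorm h <= 1 + eps /\ (forall b, In b C -> Rabs (b h) <= eps) /\
  dnorm X u - eps <= u h.

Lemma average_almost_norming (u : (G -> R) -> R) C f q ps d :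
  in_dual X u -> (forall b, In b C -> in_dual X b) -> (forall n, X (f n)) ->
  0 < INR (length ps) -> / INR (length ps) < d ->
  (forall g, Rabs (diff_sum f q ps g) <= INR (length ps) * (1 + d) + 1) ->
  (forall b, In b C -> forall p, In p ps -> Rabs (b (f q) - b (f p)) <= d) ->
  (forall p, In p ps -> Rabs (u (f p)) <= d) ->
  dnorm X u - d <= u (f q) ->
  almost_norming u C (2 * d) (fun g => / INR (length ps) * diff_sum f q ps g).
Proof.
  intros hu hC hfX hK hinv hsum hstab hsmall hnorming.
  assert (hd : 0 < d) by (pose proof (Rinv_0_lt_compat _ hK); lra).
  repeat split.
  - apply X_scale, diff_sum_in_X; auto.
  - apply supnorm_le; [|lra]. intros g.
    rewrite Rabs_mult, Rabs_inv, (Rabs_pos_eq (INR _)) by lra.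
    specialize (hsum g).
    apply Rmult_le_reg_l with (INR (length ps)); auto.
    rewrite <- Rmult_assoc, Rinv_r by lra.
    assert (hKd : 1 < INR (length ps) * d).
    { replace 1 with (INR (length ps) * / INR (length ps)) by (field; lra).
      apply Rmult_lt_compat_l; auto. }
    lra.
  - intros b hb.
    rewrite (dual_scale X hX b (hC b hb)), diff_sum_eval by auto using diff_sum_in_X.
    apply Rle_trans with d; [|lra].
    apply average_abs_le; auto.
  - rewrite (dual_scale X hX u hu), diff_sum_eval by auto using diff_sum_in_X.
    apply average_ge; auto. intros p hp.
    pose proof (hsmall p hp) as hp'. apply Rabs_le_iff in hp'. lra.
Qed.

(* Choose norming vectors [f n],
   make the [C]-values of [f r] stable along an infinite subset, run the
   gliding hump there, and average at an index [q] so large that [u q] is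
   small on the finitely many chosen [f p]. *)
Lemma almost_norming_in_infinite_set (u : nat -> (G -> R) -> R) C eps S :
  (forall n, in_dual X (u n)) -> (forall f, X f -> Un_cv (fun n => u n f) 0) ->
  (forall b, In b C -> in_dual X b) -> 0 < eps -> infinitely S ->
  exists q, S q /\ exists h, almost_norming (u q) C eps h.
Proof.
  intros hu hnull hC he hS.
  set (d := eps / 2). assert (hd : 0 < d) by (unfold d; lra).
  destruct (choice (fun n f => X f /\ supnorm f <= 1 /\ dnorm X (u n) - d <= u n f))
    as [f hf]; [intros n; now apply dnorm_approx|].
  assert (hfX : forall n, X (f n)) by apply hf.
  assert (hf1 : forall n g, Rabs (f n g) <= 1).
  { intros n g. pose proof (supnorm_ge_coord (f n) g (X_bounded X hX _ (hfX n))).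
    pose proof (hf n). lra. }
  destruct (refine_oscillation_list C (fun b r => b (f r)) d hd S hS)
    as [T0 [hT0 [hT0S hT0C]]].
  { intros b hb. destruct (dual_bounded X b (hC b hb)) as [Cb [hCb0 hCb]].
    exists Cb. intros r _. specialize (hCb (f r) (hfX r)).
    pose proof (hf r). pose proof (supnorm_nonneg (f r)). nra. }
  destruct (INR_archimed d 1 hd) as [K hK].
  assert (hK0 : 0 < INR K).
  { destruct K; [simpl in hK; lra|]. apply lt_0_INR; lia. }
  destruct (hump_construction f (fun n => proj1 hX (f n) (hfX n)) hf1 d hd T0 hT0 K)
    as [ps [T [hlen [hT [hps [hTT0 [_ [_ hsum]]]]]]]].
  subst K.
  destruct (eventually_small_on_list (fun p q => u q (f p)) ps d hd) as [M hM].
  { intros p. apply hnull; auto. }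
  destruct (hT M) as [q [hqM Tq]].
  exists q. split; [now apply hT0S, hTT0|].
  replace eps with (2 * d) by (unfold d; field).
  exists (fun g => / INR (length ps) * diff_sum f q ps g).
  apply average_almost_norming; auto.
  - apply Rmult_lt_reg_l with (INR (length ps)); auto. rewrite Rinv_r; lra.
  - apply hf.
Qed.

Lemma almost_norming_eventually (u : nat -> (G -> R) -> R) C eps :
  (forall n, in_dual X (u n)) -> (forall f, X f -> Un_cv (fun n => u n f) 0) ->
  (forall b, In b C -> in_dual X b) -> 0 < eps ->
  exists N, forall n, (N <= n)%nat -> exists h, almost_norming (u n) C eps h.
Proof.
  intros hu hnull hC he.
  apply NNPP. intros hnot.
  destruct (almost_norming_in_infinite_set u C eps
              (fun n => ~ exists h, almost_norming (u n) C eps h) hu hnull hC he)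
    as [q [hq hgood]]; [|contradiction].
  intros N. apply NNPP. intros hfin. apply hnot. exists N. intros n hn.
  apply NNPP. intros hbad. apply hfin. exists n; auto.
Qed.

End Hump.

(* Finite codimension: a vector [h] on which the functionals of [B] are small
   is close to their common kernel in [X].  This is the quantitative form of
   "a finite-codimensional subspace is complemented". *)
Section Correction.
Context {G : Type}.
Variable X : (G -> R) -> Prop.
Hypothesis hX : closed_subspace_c0 X.

Definition corrects (B : list ((G -> R) -> R)) (K : R) : Prop :=
  forall e h, X h -> (forall b, In b B -> Rabs (b h) <= e) ->
  exists h', X h' /\ (forall b, In b B -> b h' = 0) /\ supnorm (fun g => h g - h' g) <= K * e.

Lemma corrects_nil : corrects nil 0.
Proof.
  intros e h hh _. exists h. repeat split; auto; [intros b []|].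
  rewrite Rmult_0_l. apply supnorm_le; [|lra]. intros g.
  rewrite Rminus_diag, Rabs_R0. lra.
Qed.

Lemma corrects_cons_vanishing b B K :
  (forall v, X v -> (forall b', In b' B -> b' v = 0) -> b v = 0) ->
  corrects B K -> corrects (b :: B) K.
Proof.
  intros hvan hcorr e h hh hsmall.
  destruct (hcorr e h hh (fun b' hb' => hsmall b' (or_intror hb'))) as [h1 [hh1 [hh1B hs1]]].
  exists h1. repeat split; auto. intros b' [<-|hb']; auto.
Qed.

(* Otherwise correct along a kernel vector [v] with [b v = 1]: replace the
   [B]-correction [h1] of [h] by [h1 - b(h1) v], where [|b h1|] is small. *)
Lemma corrects_cons_along b B K Cb v : in_dual X b -> (forall b', In b' B -> in_dual X b') ->
  0 <= K -> 0 <= Cb -> (forall f, X f -> Rabs (b f) <= Cb * supnorm f) ->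
  X v -> (forall b', In b' B -> b' v = 0) -> b v = 1 ->
  corrects B K -> corrects (b :: B) (K + (1 + Cb * K) * supnorm v).
Proof.
  intros hb hB hK hCb0 hCb hv hBv hbv hcorr e h hh hsmall.
  set (E := supnorm v). pose proof (supnorm_nonneg v) as hE. fold E in hE.
  assert (he : 0 <= e).
  { pose proof (hsmall b (or_introl eq_refl)). pose proof (Rabs_pos (b h)). lra. }
  destruct (hcorr e h hh (fun b' hb' => hsmall b' (or_intror hb'))) as [h1 [hh1 [hh1B hs1]]].
  set (c := b h1).
  assert (hd1 : X (fun g => h g - h1 g)) by (apply X_sub; auto).
  assert (hc : Rabs c <= e + Cb * (K * e)).
  { unfold c. replace (b h1) with (b h - b (fun g => h g - h1 g))
      by (rewrite (dual_sub X b hb) by auto; ring).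
    pose proof (Rabs_sub_le (b h) (b (fun g => h g - h1 g))).
    pose proof (hsmall b (or_introl eq_refl)). pose proof (hCb _ hd1).
    assert (Cb * supnorm (fun g => h g - h1 g) <= Cb * (K * e))
      by (apply Rmult_le_compat_l; auto).
    lra. }
  exists (fun g => h1 g - c * v g). repeat split.
  - apply X_sub; auto. apply X_scale; auto.
  - intros b' [<-|hb'].
    + rewrite (dual_sub X b hb), (dual_scale X hX b hb), hbv
        by (try apply (X_scale X hX); auto).
      unfold c. ring.
    + rewrite (dual_sub X b' (hB b' hb')), (dual_scale X hX b' (hB b' hb')), hBv, hh1B
        by (try apply (X_scale X hX); auto).
      ring.
  - assert (hCK : 0 <= Cb * K) by (apply Rmult_le_pos; auto).
    assert (hKe : 0 <= K * e) by (apply Rmult_le_pos; auto).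
    assert (hCKE : 0 <= (1 + Cb * K) * E * e) by (repeat apply Rmult_le_pos; lra).
    apply supnorm_le; [|nra]. intros g.
    replace (h g - (h1 g - c * v g)) with ((h g - h1 g) + c * v g) by ring.
    pose proof (Rabs_triang (h g - h1 g) (c * v g)). rewrite Rabs_mult in *.
    pose proof (supnorm_ge_coord _ g (X_bounded X hX _ hd1)).
    pose proof (supnorm_ge_coord v g (X_bounded X hX _ hv)) as hvg. fold E in hvg.
    assert (Rabs c * Rabs (v g) <= (e + Cb * (K * e)) * E)
      by (apply Rmult_le_compat; auto using Rabs_pos).
    nra.
Qed.

Lemma corrects_cons b B K : in_dual X b -> (forall b', In b' B -> in_dual X b') ->
  0 <= K -> corrects B K -> exists K', 0 <= K' /\ corrects (b :: B) K'.
Proof.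
  intros hb hB hK hcorr.
  destruct (dual_bounded X b hb) as [Cb [hCb0 hCb]].
  destruct (classic (exists v, X v /\ (forall b', In b' B -> b' v = 0) /\ b v <> 0))
    as [[v0 [hv0 [hv0B hv0b]]]|hnone].
  - set (v := fun g => / (b v0) * v0 g).
    assert (hv : X v) by (apply X_scale; auto).
    assert (hbv : b v = 1) by (unfold v; rewrite (dual_scale X hX b hb) by auto; field; auto).
    assert (hBv : forall b', In b' B -> b' v = 0).
    { intros b' hb'. unfold v.
      rewrite (dual_scale X hX b' (hB b' hb')), (hv0B b' hb') by auto. ring. }
    exists (K + (1 + Cb * K) * supnorm v). split.
    + pose proof (supnorm_nonneg v). pose proof (Rmult_le_pos _ _ hCb0 hK).
      assert (0 <= (1 + Cb * K) * supnorm v) by (apply Rmult_le_pos; lra). lra.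
    + now apply corrects_cons_along.
  - exists K. split; auto. apply corrects_cons_vanishing; auto.
    intros v hv hvB. apply NNPP. intros hne. apply hnone. exists v. auto.
Qed.

Lemma corrects_exists B : (forall b, In b B -> in_dual X b) -> exists K, 0 <= K /\ corrects B K.
Proof.
  induction B as [|b B IH]; intros hB.
  - exists 0. split; [lra|apply corrects_nil].
  - destruct IH as [K [hK hcorr]]; [intros; apply hB; now right|].
    apply corrects_cons with K; auto; intros; apply hB; simpl; auto.
Qed.

End Correction.

Section Annihilator.
Context {G : Type}.
Variable X : (G -> R) -> Prop.
Hypothesis hX : closed_subspace_c0 X.

Lemma annihilated_almost_norming (u : nat -> (G -> R) -> R) x B delta :
  (forall n, in_dual X (u n)) -> (forall f, X f -> Un_cv (fun n => u n f) 0) ->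
  in_dual X x -> (forall b, In b B -> in_dual X b) -> 0 < delta ->
  exists N, forall n, (N <= n)%nat -> exists h, X h /\ (forall b, In b B -> b h = 0) /\
    supnorm h <= 1 + delta /\ Rabs (x h) <= delta /\
    dnorm X (u n) * (1 - delta) - delta <= u n h.
Proof.
  intros hu hnull hx hB hdelta.
  destruct (corrects_exists X hX B hB) as [K [hK hcorr]].
  set (xn := dnorm X x). assert (hxn : 0 <= xn) by apply dnorm_nonneg.
  set (e := delta / (1 + K + K * xn)).
  assert (hKxn : 0 <= K * xn) by (apply Rmult_le_pos; auto).
  assert (he : 0 < e) by (apply Rdiv_lt_0_compat; lra).
  assert (he_def : e * (1 + K + K * xn) = delta) by (unfold e; field; lra).
  assert (hKe : 0 <= K * e) by (apply Rmult_le_pos; lra).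
  assert (hsmall1 : e + K * e <= delta) by nra.
  assert (hsmall2 : e + xn * (K * e) <= delta) by nra.
  destruct (almost_norming_eventually X hX u (x :: B) e hu hnull) as [N hN]; auto.
  { intros b [<-|hb]; auto. }
  exists N. intros n hn.
  destruct (hN n hn) as [h [hh [hsh [hCh hun]]]].
  destruct (hcorr e h hh (fun b hb => hCh b (or_intror hb))) as [h' [hh' [hB' hdist]]].
  assert (hd : X (fun g => h g - h' g)) by (apply X_sub; auto).
  set (rho := supnorm (fun g => h g - h' g)) in *.
  assert (hrho : 0 <= rho) by apply supnorm_nonneg.
  assert (hzn : 0 <= dnorm X (u n)) by apply dnorm_nonneg.
  assert (hux : Rabs (u n (fun g => h g - h' g)) <= dnorm X (u n) * rho)
    by (apply dnorm_bound; auto).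
  assert (hxx : Rabs (x (fun g => h g - h' g)) <= xn * rho) by (apply dnorm_bound; auto).
  assert (hsplit : forall phi, in_dual X phi -> phi h' = phi h - phi (fun g => h g - h' g))
    by (intros phi hphi; rewrite (dual_sub X phi hphi) by auto; ring).
  exists h'. repeat split; auto.
  - apply supnorm_le; [|lra]. intros g.
    pose proof (supnorm_ge_coord h g (X_bounded X hX _ hh)).
    pose proof (supnorm_ge_coord _ g (X_bounded X hX _ hd)) as hdg. fold rho in hdg.
    pose proof (Rabs_sub_le (h g) (h g - h' g)).
    replace (h g - (h g - h' g)) with (h' g) in * by ring. lra.
  - rewrite (hsplit x hx).
    pose proof (hCh x (or_introl eq_refl)).
    pose proof (Rabs_sub_le (x h) (x (fun g => h g - h' g))).
    assert (xn * rho <= xn * (K * e)) by (apply Rmult_le_compat_l; auto). lra.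
  - rewrite (hsplit (u n) (hu n)). apply Rabs_le_iff in hux.
    assert (dnorm X (u n) * rho <= dnorm X (u n) * delta)
      by (apply Rmult_le_compat_l; lra).
    lra.
Qed.

End Annihilator.

Lemma perturbed_lower_bound t eps delta D : 0 < delta ->
  delta * (2 * Rabs t + 2) <= eps -> t * (1 - delta) - 2 * delta <= D * (1 + delta) ->
  t - eps <= D.
Proof.
  intros hdelta hdelta_eps hineq.
  apply Rnot_lt_le. intros hlt.
  assert (D * (1 + delta) < (t - eps) * (1 + delta)) by (apply Rmult_lt_compat_r; lra).
  assert (t * delta <= Rabs t * delta) by (apply Rmult_le_compat_r; [lra|apply Rle_abs]).
  assert (0 <= eps * delta) by (apply Rmult_le_pos; pose proof (Rabs_pos t); nra).
  lra.
Qed.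

(* Test
   against an almost norming vector [h] of [x_n - x] in the kernel of [B] on
   which [x] is small: there [x_n - sum_i c_i b_i] equals [(x_n - x) + x]. *)
Lemma dist_lower_bound {G : Type} (X : (G -> R) -> Prop) (hX : closed_subspace_c0 X)
  (xs : nat -> (G -> R) -> R) (x : (G -> R) -> R)
  (hxs : forall n, in_dual X (xs n)) (hx : in_dual X x)
  (hconv : forall f, X f -> Un_cv (fun n => xs n f) (x f))
  (B : list ((G -> R) -> R)) (hB : forall b, In b B -> in_dual X b) t eps :
  0 < eps -> exists N, forall n, (N <= n)%nat -> forall c,
    t <= dnorm X (fun f => xs n f - x f) ->
    t - eps <= dnorm X (fun f => xs n f - lin_comb c B f).
Proof.
  intros he.
  set (delta := Rmin 1 (eps / (2 * Rabs t + 2))).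
  assert (hat : 0 <= Rabs t) by apply Rabs_pos.
  assert (hdelta : 0 < delta).
  { apply Rmin_glb_lt; [lra|]. apply Rdiv_lt_0_compat; lra. }
  assert (hdelta1 : delta <= 1) by apply Rmin_l.
  assert (hdelta_eps : delta * (2 * Rabs t + 2) <= eps).
  { apply Rle_trans with (eps / (2 * Rabs t + 2) * (2 * Rabs t + 2)).
    - apply Rmult_le_compat_r; [lra|apply Rmin_r].
    - right. field. lra. }
  set (z := fun n f => xs n f - x f).
  assert (hz : forall n, in_dual X (z n)) by (intros; apply in_dual_sub; auto).
  assert (hznull : forall f, X f -> Un_cv (fun n => z n f) 0).
  { intros f hf e' he'. destruct (hconv f hf e' he') as [N hN]. exists N. intros n hn.
    specialize (hN n hn). unfold R_dist, z in *. now rewrite Rminus_0_r. }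
  destruct (annihilated_almost_norming X hX z x B delta hz hznull hx hB hdelta) as [N hN].
  exists N. intros n hn c ht. change (t <= dnorm X (z n)) in ht.
  destruct (hN n hn) as [h [hh [hBh [hsh [hxh hzh]]]]].
  set (phi := fun f => xs n f - lin_comb c B f).
  assert (hphi : in_dual X phi) by (apply in_dual_sub, lin_comb_in_dual; auto).
  assert (hphih : phi h = z n h + x h).
  { unfold phi, z. rewrite lin_comb_annihilated by auto. ring. }
  set (D := dnorm X phi). assert (hD : 0 <= D) by apply dnorm_nonneg.
  assert (hupper : phi h <= D * (1 + delta)).
  { pose proof (dnorm_bound X hX phi hphi h hh) as hb. fold D in hb.
    pose proof (Rle_abs (phi h)).
    assert (D * supnorm h <= D * (1 + delta)) by (apply Rmult_le_compat_l; auto). lra. }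
  assert (hlower : t * (1 - delta) - 2 * delta <= phi h).
  { rewrite hphih. apply Rabs_le_iff in hxh.
    assert (t * (1 - delta) <= dnorm X (z n) * (1 - delta)) by (apply Rmult_le_compat_r; lra).
    lra. }
  apply (perturbed_lower_bound t eps delta D); auto; lra.
Qed.

(* Main theorem: the liminf comparison applied to [d_n = dist(x_n, span B)] and
   [a_n = ||x_n||], using [||x_n|| <= ||x_n - x|| + ||x||]. *)
Theorem lemma1p3 (Gamma : Type) (X : (Gamma -> R) -> Prop)
  (hX : closed_subspace_c0 X)
  (xs : nat -> (Gamma -> R) -> R) (x : (Gamma -> R) -> R)
  (hxs : forall n, in_dual X (xs n)) (hx : in_dual X x)
  (hconv : forall f, X f -> Un_cv (fun n => xs n f) (x f))
  (B : list ((Gamma -> R) -> R)) (hB : forall b, In b B -> in_dual X b) :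
  liminf (fun n => dist_span X (xs n) B) >=
  liminf (fun n => dnorm X (xs n)) - dnorm X x.
Proof.
  apply liminf_ge_shift.
  - intros n. split; [|apply dist_span_le_dnorm].
    apply dist_span_ge. intros c _. apply dnorm_nonneg.
  - apply dnorm_nonneg.
  - intros t eps he.
    destruct (dist_lower_bound X hX xs x hxs hx hconv B hB t eps he) as [N hN].
    exists N. intros n hn ht. apply dist_span_ge. intros c _. apply hN; auto.
    pose proof (dnorm_le_sub X (xs n) x (hxs n) hx). lra.
Qed.
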